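(* Assume $D=D_K$ is prime, let $p>2$ be a prime split in $K$ (equivalently $\chi_K(p)=1$), and let $\pi\in\mathcal O$ with $N(\pi)=p$. Then for all $u,v\in\mathcal D^{-1}$ and all $\sigma\in\Gamma_0(p)$, $$M_{\pi u,\pi v}(\sigma)=M_{u,v}\!\left(\begin{pmatrix}p&0\\0&1\end{pmatrix}\sigma\begin{pmatrix}p^{-1}&0\\0&1\end{pmatrix}\right).$$
   Context: $K$ is an imaginary quadratic field of class number one with discriminant $-D$, ring of integers $\mathcal O$, quadratic character $\chi_K$, $N(a)=a\bar a=|a|^2$, $\mathcal D^{-1}=\mathcal O/\sqrt{-D}$, $e[z]=e^{2\pi iz}$. For $\sigma=\begin{pmatrix}a&b\\ c&d\end{pmatrix}\in\mathrm{SL}_2(\mathbf Z)$ and $u,v\in\mathcal D^{-1}$ define $M_{u,v}(\sigma)=\frac{-i}{c\sqrt D}\sum_{\gamma\in(u+\mathcal O)/c\mathcal O}e\big[\frac{a|\gamma|^2-\gamma\bar v-\bar\gamma v+d|v|^2}{c}\big]$ if $c\ne0$, and $M_{u,v}(\sigma)=\mathrm{sign}(a)\,\delta_{u,av}\,e[ab|u|^2]$ if $c=0$, where $\delta_{u,av}=1$ if $u\equiv av\pmod{\mathcal O}$ and $0$ otherwise. (These are the coefficients in the transformation law $\vartheta_u|[\sigma]_1=\sum_{v\in\mathcal D^{-1}/\mathcal O}M_{u,v}(\sigma)\vartheta_v$ of the theta functions $\vartheta_u(\tau,z,w)=\sum_{a\in u+\mathcal O}e[N(a)\tau+\bar az+aw]$.)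 *)

From Stdlib Require Import Reals ZArith Znumtheory List ClassicalEpsilon.
Open Scope R_scope.

Definition Cx : Type := (R * R)%type.
Definition C0 : Cx := (0, 0).
Definition C1 : Cx := (1, 0).
Definition Ci : Cx := (0, 1).
Definition Cadd (z w : Cx) : Cx := (fst z + fst w, snd z + snd w).
Definition Copp (z : Cx) : Cx := (- fst z, - snd z).
Definition Csub (z w : Cx) : Cx := Cadd z (Copp w).
Definition Cmul (z w : Cx) : Cx :=
  (fst z * fst w - snd z * snd w, fst z * snd w + snd z * fst w).
Definition Cconj (z : Cx) : Cx := (fst z, - snd z).
Definition Cscale (r : R) (z : Cx) : Cx := (r * fst z, r * snd z).
Definition Csum (l : list Cx) : Cx := fold_right Cadd C0 l.

(* e[z] = exp(2 pi i z) for complex z *)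
Definition e (z : Cx) : Cx :=
  (exp (- 2 * PI * snd z) * cos (2 * PI * fst z),
   exp (- 2 * PI * snd z) * sin (2 * PI * fst z)).

Definition Nm (z : Cx) : Cx := Cmul z (Cconj z).

Definition sqrtmD (D : Z) : Cx := (0, sqrt (IZR D)).
(* the element a + b * (1 + sqrt(-D))/2 of O  (D = 3 mod 4) *)
Definition OZ (D a b : Z) : Cx :=
  (IZR a + IZR b / 2, IZR b * sqrt (IZR D) / 2).
Definition In_O (D : Z) (z : Cx) : Prop := exists a b : Z, z = OZ D a b.
(* inverse different  D^{-1} = O / sqrt(-D) *)
Definition In_Dinv (D : Z) (z : Cx) : Prop := In_O D (Cmul z (sqrtmD D)).

Definition is_ideal (D : Z) (I : Cx -> Prop) : Prop :=
  (forall z, I z -> In_O D z) /\ I C0 /\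
  (forall z w, I z -> I w -> I (Cadd z w)) /\
  (forall r z, In_O D r -> I z -> I (Cmul r z)).
Definition class_number_one (D : Z) : Prop :=
  forall I, is_ideal D I ->
    exists g, In_O D g /\ forall z, I z <-> exists r, In_O D r /\ z = Cmul r g.

(* chi_K(p) = 1 for an odd prime p : -D is a nonzero square mod p *)
Definition chiK_is_one (D p : Z) : Prop :=
  ~ (p | D)%Z /\ exists x : Z, (p | x * x + D)%Z.

Definition Rdelta (P : Prop) : R :=
  if excluded_middle_informative P then 1 else 0.

(* representatives gamma = u + x + y*omega, 0 <= x,y < |c|, of (u+O)/cO *)
Definition reps (D : Z) (u : Cx) (c : Z) : list Cx :=
  flat_map (fun x : nat =>
    map (fun y : nat => Cadd u (OZ D (Z.of_nat x) (Z.of_nat y)))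
        (seq 0 (Z.to_nat (Z.abs c))))
    (seq 0 (Z.to_nat (Z.abs c))).

(* M_{u,v}(sigma) for sigma = [[a,b],[c,d]] *)
Definition M (D : Z) (u v : Cx) (a b c d : Z) : Cx :=
  if Z.eqb c 0 then
    Cscale (IZR (Z.sgn a) * Rdelta (In_O D (Csub u (Cscale (IZR a) v))))
           (e (Cscale (IZR (a * b)) (Nm u)))
  else
    Cmul (0, - / (IZR c * sqrt (IZR D)))
      (Csum (map (fun g =>
         e (Cscale (/ IZR c)
              (Cadd (Csub (Csub (Cscale (IZR a) (Nm g)) (Cmul g (Cconj v)))
                          (Cmul (Cconj g) v))
                    (Cscale (IZR d) (Nm v)))))
        (reps D u c))).

(* Write c = p q.  If q = 0, both sides are coefficients with c = 0, and pi (u - a v) lies in O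
   iff u - a v does, because N(pi) = p is prime to D.  If q <> 0, write pi = A + B omega and
   complete (A, B) to a unimodular matrix, A y - B x = 1; the substitution
   (X, Y) = (x t + A s, y t + B s) reparametrizes (pi u + O) / c O.  Shifting s by q multiplies
   the summand by e[a t (2 theta + 1) / p], where 2 theta + 1 = Tr(conj(pi) (x + y omega)) is
   prime to p, so the inner sum over s vanishes unless p | t.  For t = p t' the representative
   is pi (u + s + t' theta + t' omega), where the summand equals that of the right-hand side at
   (s + t' theta, t'); each of these values occurs p times, which cancels the extra factor p
   in c = p q. *)

From Pilot Require Import Defs.
From Stdlib Require Import Reals ZArith Znumtheory List Permutation Lra Lia ClassicalEpsilon.
Open Scope R_scope.

Lemma pair_eq (x1 y1 x2 y2 : R) : x1 = x2 -> y1 = y2 -> (x1, y1) = (x2, y2).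
Proof. now intros -> ->. Qed.

Ltac Cx_ring :=
  repeat match goal with z : Cx |- _ => destruct z end;
  unfold Nm, Csub, Cadd, Copp, Cmul, Cconj, Cscale, C0, Defs.C1; simpl;
  apply pair_eq; ring.

Lemma e_add z w : e (Cadd z w) = Cmul (e z) (e w).
Proof.
  destruct z as [x1 y1], w as [x2 y2]; unfold e, Cadd, Cmul; simpl.
  replace (- 2 * PI * (y1 + y2)) with (- 2 * PI * y1 + - 2 * PI * y2) by ring.
  replace (2 * PI * (x1 + x2)) with (2 * PI * x1 + 2 * PI * x2) by ring.
  rewrite exp_plus, cos_plus, sin_plus. apply pair_eq; ring.
Qed.

Lemma e_IZR n : e (IZR n, 0) = Defs.C1.
Proof.
  unfold e, Defs.C1; simpl. rewrite Rmult_0_r, exp_0, !Rmult_1_l.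
  assert (Hsin : sin (PI * IZR n) = 0) by (apply sin_eq_0_1; exists n; ring).
  replace (2 * PI * IZR n) with (2 * (PI * IZR n)) by ring.
  rewrite cos_2a_sin, sin_2a, Hsin. apply pair_eq; ring.
Qed.

Lemma e_eq_C1 x : e (x, 0) = Defs.C1 -> exists m, x = IZR m.
Proof.
  unfold e, Defs.C1; simpl. rewrite Rmult_0_r, exp_0, !Rmult_1_l.
  intros [= Hcos _].
  replace (2 * PI * x) with (2 * (PI * x)) in Hcos by ring.
  rewrite cos_2a_sin in Hcos.
  destruct (sin_eq_0_0 (PI * x)) as [m Hm].
  { apply Rsqr_0_uniq. unfold Rsqr. lra. }
  exists m. pose proof PI_RGT_0. apply (Rmult_eq_reg_l PI); lra.
Qed.

Lemma Cmul_fixed_eq_C0 z w : z = Cmul z w -> w <> Defs.C1 -> z = C0.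
Proof.
  destruct z as [x1 x2], w as [w1 w2]. unfold Cmul, Defs.C1, C0; simpl.
  intros [= H1 H2] Hw.
  assert (Hn : (w1 - 1) * (w1 - 1) + w2 * w2 <> 0).
  { intro H0. apply Hw.
    pose proof (Rle_0_sqr (w1 - 1)). pose proof (Rle_0_sqr w2). unfold Rsqr in *.
    f_equal; [cut (w1 - 1 = 0); [lra|]|]; apply Rsqr_0_uniq; unfold Rsqr; lra. }
  assert (E1 : x1 * (w1 - 1) - x2 * w2 = 0) by lra.
  assert (E2 : x2 * (w1 - 1) + x1 * w2 = 0) by lra.
  apply pair_eq; apply (Rmult_eq_reg_r ((w1 - 1) * (w1 - 1) + w2 * w2)); try exact Hn.
  - replace (x1 * _) with ((w1 - 1) * (x1 * (w1 - 1) - x2 * w2) + w2 * (x2 * (w1 - 1) + x1 * w2))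
      by ring. rewrite E1, E2. ring.
  - replace (x2 * _) with ((w1 - 1) * (x2 * (w1 - 1) + x1 * w2) - w2 * (x1 * (w1 - 1) - x2 * w2))
      by ring. rewrite E1, E2. ring.
Qed.

Lemma Csum_app l1 l2 : Csum (l1 ++ l2) = Cadd (Csum l1) (Csum l2).
Proof.
  induction l1 as [|z l1 IH]; simpl.
  - destruct (Csum l2). Cx_ring.
  - rewrite IH. Cx_ring.
Qed.

Lemma Csum_perm l1 l2 : Permutation l1 l2 -> Csum l1 = Csum l2.
Proof. induction 1; simpl; try congruence. Cx_ring. Qed.

Lemma Csum_map_scale {A} r (f : A -> Cx) l :
  Csum (map (fun a => Cscale r (f a)) l) = Cscale r (Csum (map f l)).
Proof. induction l; simpl; [|rewrite IHl; destruct (f a)]; Cx_ring. Qed.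

Lemma Csum_map_mulr {A} (f : A -> Cx) z l :
  Csum (map (fun a => Cmul (f a) z) l) = Cmul (Csum (map f l)) z.
Proof. induction l; simpl; [|rewrite IHl; destruct (f a)]; Cx_ring. Qed.

Lemma Csum_map_zero {A} (f : A -> Cx) l :
  (forall a, In a l -> f a = C0) -> Csum (map f l) = C0.
Proof.
  induction l as [|a l IH]; intro H; simpl; auto.
  rewrite H, IH; [Cx_ring | intros b Hb; apply H; now right | now left].
Qed.

Lemma Csum_map_reindex {A} (phi : A -> A) (F : A -> Cx) l : NoDup l ->
  (forall a, In a l -> In (phi a) l) ->
  (forall a b, In a l -> In b l -> phi a = phi b -> a = b) ->
  Csum (map (fun a => F (phi a)) l) = Csum (map F l).
Proof.
  intros Hl Hin Hinj. rewrite <- map_map. apply Csum_perm, Permutation_map.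
  apply Permutation_map_same_l; [now apply FinFun.Injective_map_NoDup_in|].
  intros b Hb. apply in_map_iff in Hb as (a & <- & Ha). auto.
Qed.

(** * Sums over [0, N) and [0, N)^2 *)

Definition zseq (N : Z) : list Z := map Z.of_nat (seq 0 (Z.to_nat N)).
Definition Zsum (N : Z) (h : Z -> Cx) : Cx := Csum (map h (zseq N)).
Definition Zsum2 (N : Z) (H : Z -> Z -> Cx) : Cx := Zsum N (fun X => Zsum N (H X)).

Definition Zperiodic (N : Z) (h : Z -> Cx) : Prop :=
  forall z i, h (z + N * i)%Z = h z.
Definition Zperiodic2 (N : Z) (H : Z -> Z -> Cx) : Prop :=
  forall X Y i j, H (X + N * i)%Z (Y + N * j)%Z = H X Y.

Lemma in_zseq N z : In z (zseq N) <-> (0 <= z < N)%Z.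
Proof.
  unfold zseq. rewrite in_map_iff. split.
  - intros (i & <- & Hi). apply in_seq in Hi. lia.
  - intros Hz. exists (Z.to_nat z). rewrite in_seq. lia.
Qed.

Lemma zseq_NoDup N : NoDup (zseq N).
Proof. apply FinFun.Injective_map_NoDup; [intros ? ? ?; lia | apply seq_NoDup]. Qed.

Lemma zseq_add m n : (0 <= m)%Z -> (0 <= n)%Z ->
  zseq (m + n) = zseq m ++ map (Z.add m) (zseq n).
Proof.
  intros Hm Hn. unfold zseq. rewrite Z2Nat.inj_add, seq_app, map_app, map_map by lia.
  f_equal. generalize 0%nat as s.
  induction (Z.to_nat n) as [|n' IH]; intro s; simpl; [reflexivity|].
  f_equal; [lia | rewrite <- Nat.add_succ_l; apply IH].
Qed.

Lemma Zsum_add m n h : (0 <= m)%Z -> (0 <= n)%Z ->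
  Zsum (m + n) h = Cadd (Zsum m h) (Zsum n (fun s => h (m + s)%Z)).
Proof. intros. unfold Zsum. now rewrite zseq_add, map_app, Csum_app, map_map. Qed.

Lemma Zsum_succ n h : (0 <= n)%Z -> Zsum (n + 1) h = Cadd (Zsum n h) (h n).
Proof.
  intros. rewrite Zsum_add by lia. unfold Zsum at 2; simpl.
  rewrite Z.add_0_r. destruct (h n). Cx_ring.
Qed.

Lemma Zsum_ext N f g : (forall z, f z = g z) -> Zsum N f = Zsum N g.
Proof. intros H. unfold Zsum. f_equal. now apply map_ext. Qed.

Lemma Zsum_scale N r h : Zsum N (fun z => Cscale r (h z)) = Cscale r (Zsum N h).
Proof. apply Csum_map_scale. Qed.

Lemma Zsum_const N z : (0 <= N)%Z -> Zsum N (fun _ => z) = Cscale (IZR N) z.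
Proof.
  revert N. apply natlike_ind; [simpl; Cx_ring|]. intros n Hn IH.
  rewrite <- Z.add_1_r, Zsum_succ, IH, plus_IZR by lia. Cx_ring.
Qed.

Lemma Zsum_blocks m n g : (0 <= m)%Z -> (0 <= n)%Z ->
  Zsum (m * n) g = Zsum n (fun t => Zsum m (fun s => g (m * t + s)%Z)).
Proof.
  intros Hm. revert n. apply natlike_ind; [now rewrite Z.mul_0_r|]. intros n Hn IH.
  now rewrite <- Z.add_1_r, Zsum_succ, Z.mul_add_distr_l, Z.mul_1_r, Zsum_add, IH by nia.
Qed.

Lemma Zperiodic_mod N h : Zperiodic N h -> forall z, h z = h (z mod N)%Z.
Proof.
  intros Hh z. destruct (Z.eq_dec N 0) as [->|HN]; [now rewrite Zmod_0_r|].
  rewrite (Z.div_mod z N HN) at 1. now rewrite Z.add_comm, Hh.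
Qed.

Lemma Zsum_periodic_mul N q h : (0 <= N)%Z -> (0 <= q)%Z -> Zperiodic N h ->
  Zsum (q * N) h = Cscale (IZR q) (Zsum N h).
Proof.
  intros HN Hq Hh. rewrite Z.mul_comm, Zsum_blocks, <- Zsum_const by auto.
  apply Zsum_ext; intro j. apply Zsum_ext; intro s.
  now rewrite Z.add_comm, Hh.
Qed.

Lemma Zsum_multiples N q g : (0 <= N)%Z -> (0 < q)%Z ->
  (forall t, ~ (q | t)%Z -> g t = C0) ->
  Zsum (q * N) g = Zsum N (fun t => g (q * t)%Z).
Proof.
  intros HN Hq Hg. rewrite Zsum_blocks by lia. apply Zsum_ext; intro t.
  replace q with (1 + (q - 1))%Z at 1 by ring.
  rewrite Zsum_add by lia.
  assert (Hrest : Zsum (q - 1) (fun s => g (q * t + (1 + s))%Z) = C0).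
  { apply Csum_map_zero. intros s Hs. apply in_zseq in Hs. apply Hg. intros [r Hr].
    destruct (Z_le_gt_dec (r - t) 0); nia. }
  rewrite Hrest. unfold Zsum. change (zseq 1) with (0%Z :: nil).
  cbn -[Z.add Z.mul]. rewrite Z.add_0_r. destruct (g (q * t)%Z). Cx_ring.
Qed.

Lemma Zdivide_sub_range N z1 z2 : (0 <= z1 < N)%Z -> (0 <= z2 < N)%Z ->
  (N | z1 - z2)%Z -> z1 = z2.
Proof. intros H1 H2 [r Hr]. destruct (Z.lt_trichotomy r 0) as [|[|]]; nia. Qed.

Lemma Zmod_eq_divide N z1 z2 : (N <> 0)%Z -> (z1 mod N = z2 mod N)%Z -> (N | z1 - z2)%Z.
Proof.
  intros HN E. exists (z1 / N - z2 / N)%Z.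
  rewrite (Z.div_mod z1 N HN) at 1. rewrite (Z.div_mod z2 N HN) at 1. rewrite E. ring.
Qed.

Lemma Zsum_shift N h k : (0 < N)%Z -> Zperiodic N h ->
  Zsum N (fun z => h (z + k)%Z) = Zsum N h.
Proof.
  intros HN Hh. unfold Zsum. rewrite (map_ext _ _ (fun z => Zperiodic_mod N h Hh (z + k))).
  apply (Csum_map_reindex (fun z => (z + k) mod N)%Z); [apply zseq_NoDup| |].
  - intros z _. apply in_zseq, Z.mod_pos_bound, HN.
  - intros z1 z2 Hz1%in_zseq Hz2%in_zseq E.
    apply (Zdivide_sub_range N); auto.
    apply Zmod_eq_divide in E as [r Hr]; [|lia]. exists r. lia.
Qed.

Lemma NoDup_list_prod {A B} (l : list A) (l' : list B) :
  NoDup l -> NoDup l' -> NoDup (list_prod l l').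
Proof.
  induction 1 as [|a l Ha Hl IH]; intros Hl'; simpl; [constructor|].
  apply NoDup_app; auto.
  - apply FinFun.Injective_map_NoDup; auto. now intros b b' [= ->].
  - intros [a' b] (b' & [= <- _] & _)%in_map_iff (Ha' & _)%in_prod_iff. contradiction.
Qed.

Lemma Zsum2_list_prod N H :
  Zsum2 N H = Csum (map (fun pr => H (fst pr) (snd pr)) (list_prod (zseq N) (zseq N))).
Proof.
  unfold Zsum2, Zsum. generalize (zseq N) at 2 3 as l.
  induction l as [|X l IH]; simpl; auto.
  now rewrite map_app, Csum_app, IH, map_map.
Qed.

Lemma Zperiodic2_mod N H : Zperiodic2 N H -> forall X Y, H X Y = H (X mod N)%Z (Y mod N)%Z.
Proof.
  intros HH X Y.
  rewrite (Zperiodic_mod N (fun X' => H X' Y))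
    by (intros z i; now rewrite <- (HH z Y i 0%Z), Z.mul_0_r, Z.add_0_r).
  apply (Zperiodic_mod N (H (X mod N)%Z)).
  intros z i. now rewrite <- (HH (X mod N)%Z z 0%Z i), Z.mul_0_r, Z.add_0_r.
Qed.

Lemma Zperiodic2_abs N H : Zperiodic2 N H -> Zperiodic2 (Z.abs N) H.
Proof.
  intros HH X Y i j. destruct (Z.abs_eq_or_opp N) as [-> | ->]; auto.
  rewrite <- (HH X Y (- i) (- j))%Z. f_equal; ring.
Qed.

Lemma Zdivide_unimodular N al be ga de X Y :
  (al * de - be * ga = 1 \/ al * de - be * ga = -1)%Z ->
  (N | al * X + be * Y)%Z -> (N | ga * X + de * Y)%Z -> (N | X)%Z /\ (N | Y)%Z.
Proof.
  intros Hdet H1 H2. set (det := (al * de - be * ga)%Z) in Hdet.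
  assert (Hdd : (det * det = 1)%Z) by (destruct Hdet as [-> | ->]; reflexivity).
  split.
  - replace X with (det * (de * (al * X + be * Y) - be * (ga * X + de * Y)))%Z
      by (transitivity (det * det * X)%Z; [unfold det | rewrite Hdd]; ring).
    apply Z.divide_mul_r, Z.divide_sub_r; now apply Z.divide_mul_r.
  - replace Y with (det * (al * (ga * X + de * Y) - ga * (al * X + be * Y)))%Z
      by (transitivity (det * det * Y)%Z; [unfold det | rewrite Hdd]; ring).
    apply Z.divide_mul_r, Z.divide_sub_r; now apply Z.divide_mul_r.
Qed.

Lemma Zsum2_unimodular N H al be ga de : (0 < N)%Z -> Zperiodic2 N H ->
  (al * de - be * ga = 1 \/ al * de - be * ga = -1)%Z ->
  Zsum2 N (fun X Y => H (al * X + be * Y)%Z (ga * X + de * Y)%Z) = Zsum2 N H.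
Proof.
  intros HN HH Hdet. rewrite !Zsum2_list_prod.
  set (phi := fun pr : Z * Z =>
    (((al * fst pr + be * snd pr) mod N)%Z, ((ga * fst pr + de * snd pr) mod N)%Z)).
  transitivity (Csum (map (fun pr => H (fst (phi pr)) (snd (phi pr)))
                          (list_prod (zseq N) (zseq N)))).
  { f_equal. apply map_ext. intros [X Y]. apply Zperiodic2_mod, HH. }
  apply (Csum_map_reindex phi (fun pr => H (fst pr) (snd pr)));
    [apply NoDup_list_prod; apply zseq_NoDup| |].
  - intros pr _. apply in_prod; apply in_zseq, Z.mod_pos_bound, HN.
  - intros [X1 Y1] [X2 Y2] (HX1 & HY1)%in_prod_iff (HX2 & HY2)%in_prod_iff [= E1 E2].
    rewrite in_zseq in HX1, HY1, HX2, HY2.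
    apply Zmod_eq_divide in E1, E2; try lia.
    destruct (Zdivide_unimodular N al be ga de (X1 - X2) (Y1 - Y2)) as [HX HY]; auto.
    + now replace (al * (X1 - X2) + be * (Y1 - Y2))%Z
        with (al * X1 + be * Y1 - (al * X2 + be * Y2))%Z by ring.
    + now replace (ga * (X1 - X2) + de * (Y1 - Y2))%Z
        with (ga * X1 + de * Y1 - (ga * X2 + de * Y2))%Z by ring.
    + f_equal; eapply Zdivide_sub_range; eauto.
Qed.

(** * The exponential sums in M *)

Definition gauss_phase (c a d : Z) (v g : Cx) : Cx :=
  Cscale (/ IZR c)
    (Cadd (Csub (Csub (Cscale (IZR a) (Nm g)) (Cmul g (Cconj v))) (Cmul (Cconj g) v))
          (Cscale (IZR d) (Nm v))).

Definition gauss_term (c a d : Z) (v g : Cx) : Cx := e (gauss_phase c a d v g).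

Lemma Csum_map_flat_map {A} (F : Cx -> Cx) (g : A -> list Cx) l :
  Csum (map F (flat_map g l)) = Csum (map (fun x => Csum (map F (g x))) l).
Proof. induction l; simpl; auto. now rewrite map_app, Csum_app, IHl. Qed.

Lemma M_nonzero_c D u v a b c d : c <> 0%Z ->
  M D u v a b c d = Cmul (0, - / (IZR c * sqrt (IZR D)))
    (Zsum2 (Z.abs c) (fun X Y => gauss_term c a d v (Cadd u (OZ D X Y)))).
Proof.
  intros Hc. unfold M. replace (c =? 0)%Z with false by (symmetry; now apply Z.eqb_neq).
  f_equal. unfold reps, Zsum2, Zsum, zseq. rewrite Csum_map_flat_map, map_map.
  f_equal. apply map_ext. intro i. now rewrite !map_map.
Qed.

Lemma Rdelta_iff (P Q : Prop) : (P <-> Q) -> Rdelta P = Rdelta Q.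
Proof.
  intros HPQ. unfold Rdelta.
  destruct (excluded_middle_informative P), (excluded_middle_informative Q); tauto.
Qed.

Lemma Nm_mul z w : Nm (Cmul z w) = Cmul (Nm z) (Nm w).
Proof. Cx_ring. Qed.

Lemma e_shift_int z n : e (Cadd z (IZR n, 0)) = e z.
Proof. rewrite e_add, e_IZR. destruct (e z). Cx_ring. Qed.

Lemma gauss_term_scale_norm p c a d pi v g : Nm pi = (IZR p, 0) -> p <> 0%Z -> c <> 0%Z ->
  gauss_term (p * c) a d (Cmul pi v) (Cmul pi g) = gauss_term c a d v g.
Proof.
  intros HN Hp Hc. unfold gauss_term, gauss_phase. f_equal.
  destruct pi as [p1 p2]. unfold Nm, Cmul, Cconj in HN; simpl in HN. injection HN as HN1 _.
  apply not_0_IZR in Hp, Hc. rewrite mult_IZR, <- HN1 in *.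
  destruct v, g. unfold Cadd, Csub, Copp, Cscale, Cmul, Cconj, Nm; simpl.
  apply pair_eq; field; auto.
Qed.

Lemma norm_prime_unimodular k A B : prime (A * A + A * B + (k + 1) * B * B) ->
  exists x y, (A * y - B * x = 1)%Z.
Proof.
  set (n := (A * A + A * B + (k + 1) * B * B)%Z). intros Hn.
  pose proof (prime_ge_2 n Hn). pose proof (Z.gcd_nonneg A B).
  destruct (Z.gcd_divide_l A B) as [a' Ha], (Z.gcd_divide_r A B) as [b' Hb].
  set (g := Z.gcd A B) in *.
  assert (Hgn : (n = (a' * a' + a' * b' + (k + 1) * b' * b') * g * g)%Z)
    by (unfold n; rewrite Ha, Hb; ring).
  assert (Hg1 : g = 1%Z).
  { assert (Hdiv : (g | n)%Z) by (exists ((a' * a' + a' * b' + (k + 1) * b' * b') * g)%Z; lia).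
    destruct (prime_divisors n Hn g Hdiv) as [E|[E|[E|E]]]; try lia.
    exfalso. rewrite E in Hgn.
    set (m := (a' * a' + a' * b' + (k + 1) * b' * b')%Z) in Hgn.
    assert (Hm : (m * n = 1)%Z) by (apply (Z.mul_reg_r _ _ n); lia).
    destruct (Z_le_gt_dec m 0); nia. }
  destruct (rel_prime_bezout A B) as [u0 v0 Huv]; [now apply Zgcd_1_rel_prime|].
  exists (- v0)%Z, u0. lia.
Qed.

Lemma e_frac_eq_C1 p r : p <> 0%Z -> e (IZR r / IZR p, 0) = Defs.C1 -> (p | r)%Z.
Proof.
  intros Hp H. destruct (e_eq_C1 _ H) as [m Hm]. exists m.
  apply not_0_IZR in Hp. apply eq_IZR. rewrite mult_IZR, <- Hm. field; auto.
Qed.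

Ltac push_IZR :=
  repeat (rewrite plus_IZR || rewrite mult_IZR || rewrite opp_IZR || rewrite minus_IZR).

Section ImaginaryQuadratic.

Variables D k : Z.
Hypothesis HDk : D = (4 * k + 3)%Z.
Hypothesis HD : (0 < D)%Z.

Lemma sqrtD_pos : 0 < sqrt (IZR D).
Proof. apply sqrt_lt_R0, IZR_lt, HD. Qed.

Lemma sqrtD_sq : sqrt (IZR D) * sqrt (IZR D) = IZR D.
Proof. apply sqrt_sqrt, IZR_le. lia. Qed.

Lemma IZR_k : IZR k = (sqrt (IZR D) * sqrt (IZR D) - 3) / 4.
Proof. rewrite sqrtD_sq, HDk. push_IZR. field. Qed.

Lemma Nm_OZ A B : Nm (OZ D A B) = (IZR (A * A + A * B + (k + 1) * B * B), 0).
Proof.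
  unfold Nm, OZ, Cmul, Cconj; simpl. push_IZR. rewrite IZR_k. apply pair_eq; field.
Qed.

Lemma Nm_OZ_eq_IZR A B n : Nm (OZ D A B) = (IZR n, 0) -> n = (A * A + A * B + (k + 1) * B * B)%Z.
Proof. rewrite Nm_OZ. intros [= E]. now apply eq_IZR. Qed.

Lemma O_add z w : In_O D z -> In_O D w -> In_O D (Cadd z w).
Proof.
  intros [a1 [b1 ->]] [a2 [b2 ->]]. exists (a1 + a2)%Z, (b1 + b2)%Z.
  unfold OZ, Cadd; simpl. push_IZR. apply pair_eq; field.
Qed.

Lemma O_mul z w : In_O D z -> In_O D w -> In_O D (Cmul z w).
Proof.
  intros [a1 [b1 ->]] [a2 [b2 ->]].
  exists (a1 * a2 - (k + 1) * b1 * b2)%Z, (a1 * b2 + b1 * a2 + b1 * b2)%Z.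
  unfold OZ, Cmul; simpl. push_IZR. rewrite IZR_k. apply pair_eq; field.
Qed.

Lemma O_scale n z : In_O D z -> In_O D (Cscale (IZR n) z).
Proof.
  intros [a1 [b1 ->]]. exists (n * a1)%Z, (n * b1)%Z.
  unfold OZ, Cscale; simpl. push_IZR. apply pair_eq; field.
Qed.

Lemma O_conj z : In_O D z -> In_O D (Cconj z).
Proof.
  intros [a1 [b1 ->]]. exists (a1 + b1)%Z, (- b1)%Z.
  unfold OZ, Cconj; simpl. push_IZR. apply pair_eq; field.
Qed.

Lemma O_sqrtmD : In_O D (sqrtmD D).
Proof. exists (-1)%Z, 2%Z. unfold OZ, sqrtmD. apply pair_eq; simpl; field. Qed.

Lemma O_OZ X Y : In_O D (OZ D X Y).
Proof. now exists X, Y. Qed.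

Lemma Dinv_add z w : In_Dinv D z -> In_Dinv D w -> In_Dinv D (Cadd z w).
Proof.
  unfold In_Dinv. intros Hz Hw.
  replace (Cmul (Cadd z w) (sqrtmD D)) with (Cadd (Cmul z (sqrtmD D)) (Cmul w (sqrtmD D)))
    by Cx_ring.
  now apply O_add.
Qed.

Lemma Dinv_scale n z : In_Dinv D z -> In_Dinv D (Cscale (IZR n) z).
Proof.
  unfold In_Dinv. intros Hz.
  replace (Cmul (Cscale (IZR n) z) (sqrtmD D)) with (Cscale (IZR n) (Cmul z (sqrtmD D)))
    by Cx_ring.
  now apply O_scale.
Qed.

Lemma Dinv_mul_O z w : In_O D z -> In_Dinv D w -> In_Dinv D (Cmul z w).
Proof.
  unfold In_Dinv. intros Hz Hw.
  replace (Cmul (Cmul z w) (sqrtmD D)) with (Cmul z (Cmul w (sqrtmD D))) by Cx_ring.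
  now apply O_mul.
Qed.

Lemma Dinv_add_OZ g X Y : In_Dinv D g -> In_Dinv D (Cadd g (OZ D X Y)).
Proof. intros Hg. apply Dinv_add; auto. apply O_mul; [apply O_OZ | apply O_sqrtmD]. Qed.

(* the element [(ga + gb omega) / sqrt(-D)] of the inverse different *)
Definition Dinv_elt (ga gb : Z) : Cx :=
  (IZR gb / 2, - (2 * IZR ga + IZR gb) / (2 * sqrt (IZR D))).

Lemma Dinv_form z : In_Dinv D z -> exists ga gb, z = Dinv_elt ga gb.
Proof.
  intros [ga [gb H]]. exists ga, gb. pose proof sqrtD_pos.
  destruct z as [z1 z2]. unfold Cmul, sqrtmD, OZ, Dinv_elt in *; simpl in H.
  injection H as H1 H2. apply pair_eq.
  - apply (Rmult_eq_reg_r (sqrt (IZR D))); [|lra]. field_simplify; lra.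
  - field_simplify; [|lra]. apply (Rmult_eq_reg_r (sqrt (IZR D))); [|lra]. field_simplify; lra.
Qed.

(* Bezout [u0 p + v0 D = 1] writes [w] as [u0 conj(pi) (pi w) + v0 D w], both terms in O *)
Lemma O_cancel_norm p pi w : rel_prime p D -> In_O D pi -> Nm pi = (IZR p, 0) ->
  In_Dinv D w -> In_O D (Cmul pi w) -> In_O D w.
Proof.
  intros HpD Hpi HN Hw Hpw.
  destruct (rel_prime_bezout _ _ HpD) as [u0 v0 Hb].
  replace w with (Cadd (Cscale (IZR u0) (Cmul (Cconj pi) (Cmul pi w)))
                       (Cscale (IZR (- v0)) (Cmul (sqrtmD D) (Cmul w (sqrtmD D))))).
  { apply O_add; apply O_scale; apply O_mul; auto using O_conj, O_sqrtmD. }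
  apply (f_equal IZR) in Hb. rewrite plus_IZR, !mult_IZR, <- sqrtD_sq in Hb.
  destruct pi as [p1 p2]. unfold Nm, Cmul, Cconj in HN; simpl in HN. injection HN as HN1 _.
  rewrite <- HN1 in Hb. unfold sqrtmD.
  destruct w as [w1 w2]. unfold Cadd, Cmul, Cconj, Cscale; simpl. rewrite opp_IZR.
  apply pair_eq; [transitivity (w1 * 1) | transitivity (w2 * 1)]; try ring;
    rewrite <- Hb; ring.
Qed.

Lemma gauss_term_periodic c a d w g i j : c <> 0%Z -> In_Dinv D g -> In_Dinv D w ->
  gauss_term c a d w (Cadd g (OZ D (c * i) (c * j))) = gauss_term c a d w g.
Proof.
  intros Hc Hg Hw.
  destruct (Dinv_form g Hg) as (ga & gb & ->), (Dinv_form w Hw) as (wa & wb & ->).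
  unfold gauss_term.
  rewrite <- (e_shift_int (gauss_phase c a d _ (Dinv_elt ga gb))
      (a * (gb * i - ga * j) + a * c * (i * i + i * j + (k + 1) * j * j) - (wb * i - wa * j))).
  f_equal. pose proof sqrtD_pos. apply not_0_IZR in Hc.
  unfold gauss_phase, Dinv_elt, OZ. push_IZR. rewrite IZR_k.
  unfold Nm, Cadd, Csub, Copp, Cscale, Cmul, Cconj; simpl. apply pair_eq; field; lra.
Qed.

Lemma M_zero_c_mul_norm p pi u v a b d : rel_prime p D -> In_O D pi -> Nm pi = (IZR p, 0) ->
  In_Dinv D u -> In_Dinv D v ->
  M D (Cmul pi u) (Cmul pi v) a b 0 d = M D u v a (p * b) 0 d.
Proof.
  intros HpD Hpi HN Hu Hv. unfold M; simpl.
  assert (Hw : In_Dinv D (Csub u (Cscale (IZR a) v))).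
  { replace (Csub u (Cscale (IZR a) v)) with (Cadd u (Cscale (IZR (- a)) v))
      by (rewrite opp_IZR; Cx_ring).
    apply Dinv_add, Dinv_scale; auto. }
  replace (Csub (Cmul pi u) (Cscale (IZR a) (Cmul pi v)))
    with (Cmul pi (Csub u (Cscale (IZR a) v))) by Cx_ring.
  rewrite (Rdelta_iff _ (In_O D (Csub u (Cscale (IZR a) v)))).
  - rewrite Nm_mul, HN, !mult_IZR. do 2 f_equal. Cx_ring.
  - split; [apply (O_cancel_norm p); auto | now apply O_mul].
Qed.

Lemma mul_OZ_unimodular p A B x y t s w : Nm (OZ D A B) = (IZR p, 0) ->
  Cadd (Cmul (OZ D A B) w) (OZ D (x * (p * t) + A * s) (y * (p * t) + B * s)) =
  Cmul (OZ D A B)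
    (Cadd w (OZ D (s + t * ((A + B) * x + (k + 1) * B * y)) (t * (A * y - B * x)))).
Proof.
  intros HN. unfold OZ in *. unfold Nm, Cmul, Cconj in HN; simpl in HN. injection HN as HN1 _.
  destruct w. unfold Cadd, Cmul; simpl. push_IZR. rewrite <- HN1, IZR_k.
  apply pair_eq; field.
Qed.

Lemma gauss_phase_shift p A B x y a d c ua ub va vb t s :
  Nm (OZ D A B) = (IZR p, 0) -> p <> 0%Z -> c <> 0%Z ->
  let pi := OZ D A B in
  let phase s := gauss_phase (p * c) a d (Cmul pi (Dinv_elt va vb))
                   (Cadd (Cmul pi (Dinv_elt ua ub)) (OZ D (x * t + A * s) (y * t + B * s))) in
  phase (s + c)%Z
  = Cadd (Cadd (phase s) (IZR (a * ub + 2 * a * s + a * c - vb), 0))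
         (IZR (a * t * (2 * ((A + B) * x + (k + 1) * B * y) + (A * y - B * x))) / IZR p, 0).
Proof.
  intros HN Hp Hc pi phase. unfold phase, pi. pose proof sqrtD_pos.
  unfold OZ in HN. unfold Nm, Cmul, Cconj in HN; simpl in HN. injection HN as HN1 _.
  apply not_0_IZR in Hp, Hc.
  unfold gauss_phase, Dinv_elt, OZ. push_IZR. rewrite <- HN1 in *. rewrite IZR_k.
  unfold Nm, Cadd, Csub, Copp, Cscale, Cmul, Cconj; simpl.
  apply pair_eq; field; repeat split; auto; try lra; intro Hz; apply Hp; nra.
Qed.

(* [conj(pi) (x + y omega) = theta + omega] has norm [theta^2 + theta + k + 1 = p N(x + y omega)],
   and [4 (theta^2 + theta + k + 1) = (2 theta + 1)^2 + D] *)
Lemma not_dvd_trace p A B x y : ~ (p | D)%Z ->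
  p = (A * A + A * B + (k + 1) * B * B)%Z -> (A * y - B * x = 1)%Z ->
  ~ (p | 2 * ((A + B) * x + (k + 1) * B * y) + 1)%Z.
Proof.
  intros HpD Hp Hxy [m Hm]. apply HpD.
  set (theta := ((A + B) * x + (k + 1) * B * y)%Z) in *.
  set (det := (A * y - B * x)%Z) in *.
  assert (Hnorm : (theta * theta + theta * det + (k + 1) * det * det
                   = (A * A + A * B + (k + 1) * B * B) * (x * x + x * y + (k + 1) * y * y))%Z)
    by (unfold theta, det; ring).
  rewrite Hxy, <- Hp in Hnorm.
  exists (4 * (x * x + x * y + (k + 1) * y * y) - m * m * p)%Z. rewrite HDk. nia.
Qed.

Lemma gauss_sum_periodic c a d w g : c <> 0%Z -> In_Dinv D g -> In_Dinv D w ->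
  Zperiodic2 (Z.abs c) (fun X Y => gauss_term c a d w (Cadd g (OZ D X Y))).
Proof.
  intros Hc Hg Hw. apply Zperiodic2_abs. intros X Y i j.
  replace (Cadd g (OZ D (X + c * i) (Y + c * j)))
    with (Cadd (Cadd g (OZ D X Y)) (OZ D (c * i) (c * j)))
    by (destruct g; unfold OZ, Cadd; simpl; push_IZR; apply pair_eq; field).
  apply gauss_term_periodic; auto using Dinv_add_OZ.
Qed.

End ImaginaryQuadratic.

Section TwistedSum.

Variables D k p A B x y : Z.
Hypotheses (HDk : D = (4 * k + 3)%Z) (HD : (0 < D)%Z) (Hp : prime p) (HpD : ~ (p | D)%Z)
  (HN : Nm (OZ D A B) = (IZR p, 0)) (Hxy : (A * y - B * x = 1)%Z).
Variables (u v : Cx) (a d q : Z).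
Hypotheses (Hu : In_Dinv D u) (Hv : In_Dinv D v) (Hq : q <> 0%Z) (Hpa : ~ (p | a)%Z).

Let pi := OZ D A B.
Let theta := ((A + B) * x + (k + 1) * B * y)%Z.
Let lhs_term X Y := gauss_term (p * q) a d (Cmul pi v) (Cadd (Cmul pi u) (OZ D X Y)).
Let rhs_term X Y := gauss_term q a d v (Cadd u (OZ D X Y)).

Lemma p_pos : (0 < p)%Z.
Proof. pose proof (prime_ge_2 p Hp). lia. Qed.

Lemma abs_pq : Z.abs (p * q) = (p * Z.abs q)%Z.
Proof. pose proof p_pos. rewrite Z.abs_mul. f_equal. lia. Qed.

Lemma lhs_periodic : Zperiodic2 (p * Z.abs q) lhs_term.
Proof.
  rewrite <- abs_pq. pose proof p_pos.
  apply (gauss_sum_periodic D k HDk HD);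
    [nia | apply (Dinv_mul_O D k HDk HD); [apply O_OZ | assumption] ..].
Qed.

Lemma rhs_periodic : Zperiodic2 (Z.abs q) rhs_term.
Proof. now apply (gauss_sum_periodic D k HDk HD). Qed.

Lemma lhs_term_shift t s :
  lhs_term (x * t + A * (s + q)) (y * t + B * (s + q))
  = Cmul (lhs_term (x * t + A * s) (y * t + B * s))
         (e (IZR (a * t * (2 * theta + 1)) / IZR p, 0)).
Proof.
  pose proof p_pos.
  destruct (Dinv_form D HD u Hu) as (ua & ub & Eu), (Dinv_form D HD v Hv) as (va & vb & Ev).
  unfold lhs_term, gauss_term, pi. rewrite Eu, Ev.
  rewrite (gauss_phase_shift D k HDk HD p) by (auto; lia).
  rewrite e_add, e_shift_int, Hxy. reflexivity.
Qed.

Lemma lhs_inner_sum_vanishes t : ~ (p | t)%Z ->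
  Zsum (p * Z.abs q) (fun s => lhs_term (x * t + A * s) (y * t + B * s)) = C0.
Proof.
  intros Ht. pose proof p_pos.
  set (zeta := e (IZR (a * t * (2 * theta + 1)) / IZR p, 0)).
  assert (Hzeta : zeta <> Defs.C1).
  { intros Hz. apply e_frac_eq_C1 in Hz; [|lia].
    apply (prime_mult p Hp) in Hz as [Hz|Hz];
      [apply (prime_mult p Hp) in Hz as [Hz|Hz]|]; try contradiction.
    revert Hz. apply (not_dvd_trace D k HDk p A B x y HpD); auto.
    now apply (Nm_OZ_eq_IZR D k HDk HD). }
  apply (Cmul_fixed_eq_C0 _ zeta); auto.
  rewrite <- (Zsum_shift _ _ q) at 1; [| nia |].
  - unfold Zsum. rewrite <- Csum_map_mulr. f_equal. apply map_ext. intro s. apply lhs_term_shift.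
  - intros s i. rewrite <- (lhs_periodic (x * t + A * s) (y * t + B * s) (A * i) (B * i))%Z.
    f_equal; ring.
Qed.

Lemma lhs_inner_sum_multiple t :
  Zsum (p * Z.abs q) (fun s => lhs_term (x * (p * t) + A * s) (y * (p * t) + B * s))
  = Cscale (IZR p) (Zsum (Z.abs q) (fun s => rhs_term s t)).
Proof.
  pose proof p_pos.
  assert (Hrow : Zperiodic (Z.abs q) (fun s => rhs_term s t)).
  { intros s i. rewrite <- (rhs_periodic s t i 0%Z). f_equal; ring. }
  transitivity (Zsum (p * Z.abs q) (fun s => rhs_term (s + t * theta)%Z t)).
  - apply Zsum_ext. intro s. unfold lhs_term, rhs_term.
    rewrite <- (gauss_term_scale_norm p q a d pi v) by (auto; lia).
    f_equal. unfold pi.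
    rewrite (mul_OZ_unimodular D k HDk HD p A B x y t s u HN), Hxy, (Z.mul_1_r t).
    reflexivity.
  - rewrite (Zsum_periodic_mul (Z.abs q) p); [| lia | lia |].
    + f_equal. apply (Zsum_shift _ (fun s => rhs_term s t)); [lia | exact Hrow].
    + intros s i. rewrite <- (Hrow (s + t * theta) i)%Z. f_equal. ring.
Qed.

Lemma lhs_sum : Zsum2 (p * Z.abs q) lhs_term = Cscale (IZR p) (Zsum2 (Z.abs q) rhs_term).
Proof.
  pose proof p_pos.
  rewrite <- (Zsum2_unimodular _ lhs_term x A y B) by (auto using lhs_periodic; lia).
  unfold Zsum2 at 1. rewrite Zsum_multiples; auto; [|lia| apply lhs_inner_sum_vanishes].
  rewrite (Zsum_ext _ _ _ lhs_inner_sum_multiple), Zsum_scale. f_equal.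
  rewrite <- (Zsum2_unimodular _ rhs_term 0 1 1 0) by (auto using rhs_periodic; lia).
  unfold Zsum2. apply Zsum_ext; intro t. apply Zsum_ext; intro s. f_equal; ring.
Qed.

Lemma M_nonzero_c_mul_norm b :
  M D (Cmul (OZ D A B) u) (Cmul (OZ D A B) v) a b (p * q) d = M D u v a (p * b) q d.
Proof.
  pose proof p_pos. pose proof (sqrtD_pos D HD).
  rewrite !M_nonzero_c by nia. rewrite abs_pq.
  pose proof lhs_sum as E. unfold lhs_term, rhs_term, pi in E. rewrite E.
  assert (IZR p <> 0) by (apply not_0_IZR; lia). apply not_0_IZR in Hq.
  destruct (Zsum2 (Z.abs q) _) as [z1 z2].
  rewrite mult_IZR. unfold Cmul, Cscale; simpl. apply pair_eq; field; lra.
Qed.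

End TwistedSum.

Theorem proposition3p6 (D : Z) (p : Z) (pi : Cx)
  (HDprime : prime D) (HDdisc : (D mod 4 = 3)%Z)
  (Hh1 : class_number_one D)
  (Hp : prime p) (Hp2 : (2 < p)%Z) (Hsplit : chiK_is_one D p)
  (Hpi : In_O D pi) (HNpi : Nm pi = (IZR p, 0)) :
  forall (u v : Cx), In_Dinv D u -> In_Dinv D v ->
  forall a b c d : Z, (a * d - b * c = 1)%Z -> (p | c)%Z ->
    M D (Cmul pi u) (Cmul pi v) a b c d = M D u v a (p * b) (c / p) d.
Proof.
  intros u v Hu Hv a b c d Hdet [q ->].
  pose proof (prime_ge_2 D HDprime). pose proof (prime_ge_2 p Hp).
  set (k := (D / 4)%Z).
  assert (HDk : D = (4 * k + 3)%Z) by (pose proof (Z.div_mod D 4); unfold k; lia).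
  assert (HD : (0 < D)%Z) by lia.
  destruct Hsplit as [HpD _].
  rewrite Z.div_mul, (Z.mul_comm q p) in * by lia.
  destruct Hpi as (A & B & ->).
  destruct (Z.eq_dec q 0) as [-> | Hq].
  - rewrite Z.mul_0_r. apply (M_zero_c_mul_norm D k HDk HD); auto using prime_rel_prime, O_OZ.
  - assert (Hpa : ~ (p | a)%Z).
    { intros [m ->]. assert (Hp1 : (p | 1)%Z) by (exists (m * d - b * q)%Z; lia).
      apply Z.divide_1_r in Hp1. lia. }
    destruct (norm_prime_unimodular k A B) as (x & y & Hxy).
    { now rewrite <- (Nm_OZ_eq_IZR D k HDk HD A B p). }
    apply (M_nonzero_c_mul_norm D k p A B x y); auto.
Qed.
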